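(* In the two-type setting described in the context: (1) if $x_1>1$ and $x_2>1$, then diffusion occurs from a small seed for every $\pi\in(0,1)$; (2) if $x_1\le1$ and $x_2\le1$, then diffusion does not occur from a small seed for any $\pi\in(0,1)$; (3) if exactly one of $x_1,x_2$ exceeds $1$, then there exists $\pi^*\in(0,1)$ such that diffusion occurs from a small seed for every $\pi\in(\pi^*,1)$.
   Context: There are two types $i\in\{1,2\}$, with meeting matrix $\Pi=\begin{pmatrix}\pi&1-\pi\\1-\pi&\pi\end{pmatrix}$, $0<\pi<1$. For each type $i$: $P_i$ is a degree distribution on the nonnegative integers; $w_i(d)>0$ are degree weights; $f_i(d,a)$, $g_i(d,a)$ ($0\le a\le d$) are adoption and abandonment rates satisfying: $f_i(d,0)=0$; $f_i(d,a)$ nondecreasing in $a$; $f_i(d,1)>0$ for some $d$ with $P_i(d)>0$; $g_i(d,0)>0$; $g_i(d,a)$ nonincreasing in $a$. Let $x_i=\sum_dP_i(d)w_i(d)\,d\,\frac{f_i(d,1)}{g_i(d,0)}$ (assumed finite; it is positive) and $A=\begin{pmatrix}\pi x_1&(1-\pi)x_2\\(1-\pi)x_1&\pi x_2\end{pmatrix}$. Diffusion occurs from a small seed means: for every $\varepsilon>0$ there exists $v\in\mathbb{R}^2$ with $0<v_i<\varepsilon$ and $(Av)_i>v_i$ for $i=1,2$. Diffusion within type $i$ when isolated corresponds to $x_i>1$. *)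

From Stdlib Require Import Reals Lra.
From Coquelicot Require Import Coquelicot.
Open Scope R_scope.

(** Data attached to one type i: degree distribution P, degree weights w,
    adoption rates f(d,a) and abandonment rates g(d,a) (0 <= a <= d). *)
Record type_data := TypeData {
  P : nat -> R;
  w : nat -> R;
  f : nat -> nat -> R;
  g : nat -> nat -> R
}.

Definition x_term (T : type_data) (d : nat) : R :=
  P T d * w T d * INR d * (f T d 1 / g T d 0).

Definition x_val (T : type_data) : R := Series (x_term T).

Definition valid_type (T : type_data) : Prop :=
  (forall d, 0 <= P T d) /\ is_series (P T) 1 /\
  (forall d, 0 < w T d) /\
  (forall d, f T d 0 = 0) /\
  (forall d a b, (a <= b)%nat -> (b <= d)%nat -> f T d a <= f T d b) /\
  (exists d, (1 <= d)%nat /\ 0 < P T d /\ 0 < f T d 1) /\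
  (forall d, 0 < g T d 0) /\
  (forall d a b, (a <= b)%nat -> (b <= d)%nat -> g T d b <= g T d a) /\
  ex_series (x_term T).

Definition A_apply1 (pi x1 x2 v1 v2 : R) : R := pi * x1 * v1 + (1 - pi) * x2 * v2.
Definition A_apply2 (pi x1 x2 v1 v2 : R) : R := (1 - pi) * x1 * v1 + pi * x2 * v2.

Definition diffusion_small_seed (pi x1 x2 : R) : Prop :=
  forall eps, 0 < eps ->
    exists v1 v2, 0 < v1 < eps /\ 0 < v2 < eps /\
      A_apply1 pi x1 x2 v1 v2 > v1 /\ A_apply2 pi x1 x2 v1 v2 > v2.

(* The matrix A is linear, so diffusion from a small seed only needs one
   positive vector v with A v > v: rescaling v makes it as small as wanted.
   If both x_i > 1, v = (1, 1) works.  If one type is supercritical, say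
   x1 > 1, then for pi > 1/x1 the vector v = (1, t) with t small works, since
   x2 >= 0.  Conversely the column sums of A are x1 and x2, so A v > v forces
   x1 v1 + x2 v2 > v1 + v2, which fails when x1, x2 <= 1. *)

From Pilot Require Import Defs.
From Stdlib Require Import Reals Lra Lia.
From Coquelicot Require Import Coquelicot.
Open Scope R_scope.

Lemma x_term_nonneg (T : type_data) (d : nat) :
  valid_type T -> 0 <= x_term T d.
Proof.
  intros (HP & _ & Hw & Hf0 & Hfmono & _ & Hg & _).
  (* f(0, 1) is unconstrained, but the term for d = 0 carries the factor 0 *)
  destruct d as [|d]; [unfold x_term; simpl; lra|].
  assert (Hf1 : 0 <= Defs.f T (S d) 1).
  { rewrite <- (Hf0 (S d)). apply Hfmono; lia. }
  unfold x_term.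
  apply Rmult_le_pos; [apply Rmult_le_pos; [apply Rmult_le_pos|]|].
  - apply HP.
  - apply Rlt_le, Hw.
  - apply pos_INR.
  - apply Rdiv_le_0_compat; [exact Hf1 | apply Hg].
Qed.

Lemma Series_const0 : Series (fun _ : nat => 0) = 0.
Proof.
  pose proof (Series_scal_l 0 (fun _ : nat => 0)) as H.
  rewrite !Rmult_0_l in H. exact H.
Qed.

Lemma x_val_nonneg (T : type_data) : valid_type T -> 0 <= x_val T.
Proof.
  intros HT. rewrite <- Series_const0.
  apply Series_le; [|apply HT].
  intros d. split; [lra | exact (x_term_nonneg T d HT)].
Qed.

Lemma A_apply1_scale (pi x1 x2 s v1 v2 : R) :
  A_apply1 pi x1 x2 (s * v1) (s * v2) = s * A_apply1 pi x1 x2 v1 v2.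
Proof. unfold A_apply1; ring. Qed.

Lemma A_apply2_scale (pi x1 x2 s v1 v2 : R) :
  A_apply2 pi x1 x2 (s * v1) (s * v2) = s * A_apply2 pi x1 x2 v1 v2.
Proof. unfold A_apply2; ring. Qed.

Lemma A_apply_sum (pi x1 x2 v1 v2 : R) :
  A_apply1 pi x1 x2 v1 v2 + A_apply2 pi x1 x2 v1 v2 = x1 * v1 + x2 * v2.
Proof. unfold A_apply1, A_apply2; ring. Qed.

Lemma diffusion_small_seed_of_witness (pi x1 x2 v1 v2 : R) :
  0 < v1 -> 0 < v2 ->
  A_apply1 pi x1 x2 v1 v2 > v1 -> A_apply2 pi x1 x2 v1 v2 > v2 ->
  diffusion_small_seed pi x1 x2.
Proof.
  intros Hv1 Hv2 HA1 HA2 eps Heps.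
  set (s := eps / (v1 + v2)).
  assert (Hs : 0 < s) by (apply Rdiv_lt_0_compat; lra).
  assert (Hsv1 : s * v1 < eps).
  { unfold s. apply (Rmult_lt_reg_r (v1 + v2)); [lra|]. field_simplify; nra. }
  assert (Hsv2 : s * v2 < eps).
  { unfold s. apply (Rmult_lt_reg_r (v1 + v2)); [lra|]. field_simplify; nra. }
  exists (s * v1), (s * v2).
  rewrite A_apply1_scale, A_apply2_scale.
  repeat split; try nra.
Qed.

Lemma diffusion_small_seed_swap (pi x1 x2 : R) :
  diffusion_small_seed pi x1 x2 -> diffusion_small_seed pi x2 x1.
Proof.
  intros D eps Heps.
  destruct (D eps Heps) as (v1 & v2 & Hv1 & Hv2 & HA1 & HA2).
  exists v2, v1. unfold A_apply1, A_apply2 in *. repeat split; lra.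
Qed.

Lemma diffusion_small_seed_supercritical (pi x1 x2 : R) :
  1 < x1 -> 1 < x2 -> 0 < pi < 1 -> diffusion_small_seed pi x1 x2.
Proof.
  intros H1 H2 Hpi.
  apply (diffusion_small_seed_of_witness pi x1 x2 1 1);
    unfold A_apply1, A_apply2; nra.
Qed.

Lemma Rinv_in_unit_interval (x : R) : 1 < x -> 0 < / x < 1.
Proof.
  intros Hx. split; [apply Rinv_0_lt_compat; lra|].
  rewrite <- Rinv_1. apply Rinv_lt_contravar; lra.
Qed.

Lemma diffusion_small_seed_high_homophily (pi x1 x2 : R) :
  1 < x1 -> 0 <= x2 -> / x1 < pi < 1 -> diffusion_small_seed pi x1 x2.
Proof.
  intros H1 H2 [Hpi Hpi1].
  assert (Hpx : pi * x1 > 1).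
  { apply (Rmult_lt_reg_r (/ x1)); [apply Rinv_0_lt_compat; lra|].
    rewrite Rmult_assoc, Rinv_r, Rmult_1_l; lra. }
  (* the seed of type 2 is small enough that type 1 alone sustains it *)
  set (t := (1 - pi) * x1 / 2).
  assert (Ht : 0 < t) by (unfold t; nra).
  assert (Hx2t : 0 <= x2 * t) by (apply Rmult_le_pos; lra).
  apply (diffusion_small_seed_of_witness pi x1 x2 1 t); unfold A_apply1, A_apply2.
  - lra.
  - exact Ht.
  - nra.
  - unfold t in *. nra.
Qed.

Lemma no_diffusion_small_seed_subcritical (pi x1 x2 : R) :
  x1 <= 1 -> x2 <= 1 -> ~ diffusion_small_seed pi x1 x2.
Proof.
  intros H1 H2 D.
  destruct (D 1 Rlt_0_1) as (v1 & v2 & Hv1 & Hv2 & HA1 & HA2).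
  pose proof (A_apply_sum pi x1 x2 v1 v2).
  nra.
Qed.

Theorem corollary2 (T1 T2 : type_data) :
  valid_type T1 -> valid_type T2 ->
  ( (x_val T1 > 1 /\ x_val T2 > 1) ->
      forall pi, 0 < pi < 1 -> diffusion_small_seed pi (x_val T1) (x_val T2) ) /\
  ( (x_val T1 <= 1 /\ x_val T2 <= 1) ->
      forall pi, 0 < pi < 1 -> ~ diffusion_small_seed pi (x_val T1) (x_val T2) ) /\
  ( ((x_val T1 > 1 /\ x_val T2 <= 1) \/ (x_val T1 <= 1 /\ x_val T2 > 1)) ->
      exists pistar, 0 < pistar < 1 /\
        forall pi, pistar < pi < 1 -> diffusion_small_seed pi (x_val T1) (x_val T2) ).
Proof.
  intros HT1 HT2.
  pose proof (x_val_nonneg T1 HT1) as Hx1.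
  pose proof (x_val_nonneg T2 HT2) as Hx2.
  generalize dependent (x_val T2). generalize dependent (x_val T1).
  intros x1 Hx1 x2 Hx2.
  split; [|split].
  - intros [H1 H2] pi Hpi. exact (diffusion_small_seed_supercritical pi x1 x2 H1 H2 Hpi).
  - intros [H1 H2] pi _. exact (no_diffusion_small_seed_subcritical pi x1 x2 H1 H2).
  - intros [[H1 _] | [_ H2]].
    + exists (/ x1). split; [exact (Rinv_in_unit_interval _ H1)|].
      intros pi Hpi. exact (diffusion_small_seed_high_homophily pi x1 x2 H1 Hx2 Hpi).
    + exists (/ x2). split; [exact (Rinv_in_unit_interval _ H2)|].
      intros pi Hpi.
      apply diffusion_small_seed_swap.
      exact (diffusion_small_seed_high_homophily pi x2 x1 H2 Hx1 Hpi).
Qed.
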